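(* In the $n$-body problem in ${\bf H}^2$ ($n\ge2$, masses $m_i>0$), there is no solution defined for all $t\in\mathbb R$ of the form ${\bf q}_i(t)=(0,\sinh(\omega t+\alpha_i),\cosh(\omega t+\alpha_i))$, $i=1,\dots,n$, with constants $\omega\ne0$ and $\alpha_i$ (the $\alpha_i$ pairwise distinct, so that the configuration is collisionless); that is, there are no hyperbolic relative equilibria along the fixed geodesic $x=0$. Since Lorentz transformations preserving ${\bf H}^2$ map any geodesic to $x=0$ and preserve the equations, the same holds along any fixed geodesic.
   Context: The $n$-body problem in ${\bf H}^2$ (Weierstrass model): with the Lorentz inner product ${\bf a}\boxdot{\bf b}=a_xb_x+a_yb_y-a_zb_z$ on $\mathbb R^3$, ${\bf H}^2=\{(x,y,z): x^2+y^2-z^2=-1,\ z>0\}$. Bodies of masses $m_1,\dots,m_n>0$ have positions ${\bf q}_i=(x_i,y_i,z_i)\in{\bf H}^2$ and satisfy $$\ddot{\bf q}_i=\sum_{j\ne i}\frac{m_j[{\bf q}_j+({\bf q}_i\boxdot{\bf q}_j){\bf q}_i]}{[({\bf q}_i\boxdot{\bf q}_j)^2-1]^{3/2}}+(\dot{\bf q}_i\boxdot\dot{\bf q}_i){\bf q}_i,\qquad {\bf q}_i\boxdot{\bf q}_i=-1,\ \ {\bf q}_i\boxdot\dot{\bf q}_i=0,$$ $i=1,\dots,n$, defined only for collisionless configurations. Geodesics of ${\bf H}^2$ are its intersections with planes through the origin. A hyperbolic relative equilibrium is a solution defined for all $t\in\mathbb R$ with $x_i$ constant, $y_i=\rho_i\sinh(\omega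 t+\alpha_i)$, $z_i=\rho_i\cosh(\omega t+\alpha_i)$, constants $\omega,\alpha_i$, $\rho_i=(1+x_i^2)^{1/2}$. *)

From Stdlib Require Export Reals Lra Lia List.
Open Scope R_scope.

Record V3 := mkV3 { vx : R; vy : R; vz : R }.

Definition vadd (a b : V3) : V3 := mkV3 (vx a + vx b) (vy a + vy b) (vz a + vz b).
Definition vscale (c : R) (a : V3) : V3 := mkV3 (c * vx a) (c * vy a) (c * vz a).
Definition vzero : V3 := mkV3 0 0 0.

Definition lor (a b : V3) : R := vx a * vx b + vy a * vy b - vz a * vz b.

Definition inH2 (a : V3) : Prop := lor a a = -1 /\ 0 < vz a.

Definition has_deriv (f f' : R -> V3) : Prop :=
  forall t, derivable_pt_lim (fun s => vx (f s)) t (vx (f' t)) /\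
            derivable_pt_lim (fun s => vy (f s)) t (vy (f' t)) /\
            derivable_pt_lim (fun s => vz (f s)) t (vz (f' t)).

Fixpoint vsum (n : nat) (F : nat -> V3) : V3 :=
  match n with
  | O => vzero
  | S k => vadd (vsum k F) (F k)
  end.

Definition force (n : nat) (m : nat -> R) (Q : nat -> V3) (i : nat) : V3 :=
  vsum n (fun j =>
    if Nat.eqb j i then vzero
    else vscale (m j / Rpower ((lor (Q i) (Q j))^2 - 1) (3/2))
                (vadd (Q j) (vscale (lor (Q i) (Q j)) (Q i)))).

Definition is_solution (n : nat) (m : nat -> R) (q : nat -> R -> V3) : Prop :=
  exists v a : nat -> R -> V3,
    forall i, (i < n)%nat ->
      has_deriv (q i) (v i) /\ has_deriv (v i) (a i) /\
      forall t,
        inH2 (q i t) /\ lor (q i t) (v i t) = 0 /\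
        (forall j, (j < n)%nat -> j <> i -> q i t <> q j t) /\
        a i t = vadd (force n m (fun j => q j t) i)
                     (vscale (lor (v i t) (v i t)) (q i t)).

(* Suppose q_i(t) = (0, sinh(w t + a_i), cosh(w t + a_i)) solved the n-body
   equations.  Differentiating twice gives y_i'' = w^2 sinh(w t + a_i).  Pick
   the body i with the largest phase a_i and the instant t0 at which it
   passes the vertex (0,0,1) of H^2, i.e. w t0 + a_i = 0.  There y_i = 0 and
   y_i'' = 0, so the y-component of the equation of motion reduces to the
   y-component of the gravitational force on body i.  But every other body
   has a smaller phase, hence lies strictly on the side y < 0 of the geodesic
   y = 0 through body i, and pulls body i towards that side: the force has a
   strictly negative y-component, a contradiction. *)
From Stdlib Require Import Reals FunctionalExtensionality.
Open Scope R_scope.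

Lemma derivable_pt_lim_affine_comp (f : R -> R) (w b t l : R) :
  derivable_pt_lim f (w * t + b) l ->
  derivable_pt_lim (fun s => f (w * s + b)) t (w * l).
Proof.
  intros Hf.
  assert (Haff : derivable_pt_lim (fun s => w * s + b) t w).
  { assert (H : derivable_pt_lim (plus_fct (fun s => w * s) (fun _ => b)) t (w * 1 + 0)).
    { apply derivable_pt_lim_plus.
      - apply (derivable_pt_lim_scal (fun s => s)), derivable_pt_lim_id.
      - apply derivable_pt_lim_const. }
    rewrite Rmult_1_r, Rplus_0_r in H. exact H. }
  rewrite Rmult_comm.
  exact (derivable_pt_lim_comp (fun s => w * s + b) f t w l Haff Hf).
Qed.

Lemma hyperbolic_accel_y (q v a : R -> V3) (w b : R) :
  has_deriv q v -> has_deriv v a ->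
  (forall t, vy (q t) = sinh (w * t + b)) ->
  forall t, vy (a t) = w ^ 2 * sinh (w * t + b).
Proof.
  intros Dq Dv Hq t.
  assert (Hvel : forall s, vy (v s) = w * cosh (w * s + b)).
  { intros s. destruct (Dq s) as [_ [Hy _]].
    replace (fun s => vy (q s)) with (fun s => sinh (w * s + b)) in Hy
      by (apply functional_extensionality; intros; symmetry; apply Hq).
    eapply uniqueness_limite; [exact Hy|].
    apply derivable_pt_lim_affine_comp, derivable_pt_lim_sinh. }
  destruct (Dv t) as [_ [Hy _]].
  replace (fun s => vy (v s)) with (fun s => w * cosh (w * s + b)) in Hy
    by (apply functional_extensionality; intros; symmetry; apply Hvel).
  eapply uniqueness_limite; [exact Hy|].
  replace (w ^ 2 * sinh (w * t + b)) with (w * (w * sinh (w * t + b))) by ring.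
  apply (derivable_pt_lim_scal (fun s => cosh (w * s + b))).
  apply derivable_pt_lim_affine_comp, derivable_pt_lim_cosh.
Qed.

Lemma vsum_vy_nonpos (k : nat) (F : nat -> V3) :
  (forall j, (j < k)%nat -> vy (F j) <= 0) -> vy (vsum k F) <= 0.
Proof.
  induction k as [|k IH]; intros HF; simpl; [lra|].
  assert (vy (vsum k F) <= 0) by (apply IH; intros; apply HF; lia).
  assert (vy (F k) <= 0) by (apply HF; lia).
  lra.
Qed.

Lemma vsum_vy_neg (k : nat) (F : nat -> V3) (j0 : nat) :
  (forall j, (j < k)%nat -> vy (F j) <= 0) ->
  (j0 < k)%nat -> vy (F j0) < 0 -> vy (vsum k F) < 0.
Proof.
  induction k as [|k IH]; intros HF Hj0 Hneg; [lia|]; simpl.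
  assert (HFk : vy (F k) <= 0) by (apply HF; lia).
  destruct (Nat.eq_dec j0 k) as [->|Hne].
  - assert (vy (vsum k F) <= 0) by (apply vsum_vy_nonpos; intros; apply HF; lia).
    lra.
  - assert (vy (vsum k F) < 0) by (apply IH; [intros; apply HF| |]; auto; lia).
    lra.
Qed.

(* If body i lies on the geodesic y = 0 and every other body lies strictly
   in the half-plane y < 0, the gravitational force on body i points strictly
   into that half-plane: its j-th term has y-component
   m_j / ((q_i.q_j)^2 - 1)^{3/2} * y_j < 0. *)
Lemma force_y_neg (n : nat) (m : nat -> R) (Q : nat -> V3) (i : nat) :
  (2 <= n)%nat -> (i < n)%nat ->
  (forall j, (j < n)%nat -> 0 < m j) ->
  vy (Q i) = 0 ->
  (forall j, (j < n)%nat -> j <> i -> vy (Q j) < 0) ->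
  vy (force n m Q i) < 0.
Proof.
  intros Hn Hi Hm HQi HQj.
  assert (Hterm : forall j, (j < n)%nat -> j <> i ->
    vy (vscale (m j / Rpower (lor (Q i) (Q j) ^ 2 - 1) (3 / 2))
               (vadd (Q j) (vscale (lor (Q i) (Q j)) (Q i)))) < 0).
  { intros j Hj Hji. simpl. rewrite HQi, Rmult_0_r, Rplus_0_r.
    (* Rpower is an exponential, hence positive *)
    assert (0 < Rpower (lor (Q i) (Q j) ^ 2 - 1) (3 / 2)) by apply exp_pos.
    apply Rmult_pos_neg; [apply Rdiv_lt_0_compat; auto | auto]. }
  set (j0 := if Nat.eqb i 0 then 1%nat else 0%nat).
  assert (Hj0 : (j0 < n)%nat /\ j0 <> i)
    by (unfold j0; destruct (Nat.eqb_spec i 0); lia).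
  apply (vsum_vy_neg n _ j0).
  - intros j Hj. destruct (Nat.eqb_spec j i); simpl; [lra|].
    left; apply Hterm; auto.
  - apply Hj0.
  - destruct (Nat.eqb_spec j0 i); [lia|]. apply Hterm; apply Hj0.
Qed.

Lemma exists_argmax (alpha : nat -> R) (n : nat) : (1 <= n)%nat ->
  exists i, (i < n)%nat /\ forall j, (j < n)%nat -> alpha j <= alpha i.
Proof.
  induction n as [|n IH]; intros Hn; [lia|].
  destruct (Nat.eq_dec n 0) as [->|Hn0].
  { exists 0%nat. split; [lia|]. intros j Hj. replace j with 0%nat by lia. lra. }
  destruct IH as [i [Hi Hmax]]; [lia|].
  destruct (Rle_dec (alpha n) (alpha i)).
  - exists i. split; [lia|]. intros j Hj.
    destruct (Nat.eq_dec j n) as [->|]; [lra|]. apply Hmax; lia.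
  - exists n. split; [lia|]. intros j Hj.
    destruct (Nat.eq_dec j n) as [->|]; [lra|].
    assert (alpha j <= alpha i) by (apply Hmax; lia). lra.
Qed.

Theorem mainTheorem17 (n : nat) (m : nat -> R) (omega : R) (alpha : nat -> R) :
  (2 <= n)%nat ->
  (forall i, (i < n)%nat -> 0 < m i) ->
  omega <> 0 ->
  (forall i j, (i < n)%nat -> (j < n)%nat -> i <> j -> alpha i <> alpha j) ->
  ~ is_solution n m
      (fun i t => mkV3 0 (sinh (omega * t + alpha i)) (cosh (omega * t + alpha i))).
Proof.
  intros Hn Hm Hw Hdist [v [a Hsol]].
  destruct (exists_argmax alpha n) as [i [Hi Hmax]]; [lia|].
  destruct (Hsol i Hi) as [Dq [Dv Heq]].
  (* t0 is the instant at which body i passes the vertex of H^2 *)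
  set (t0 := - alpha i / omega).
  assert (Ht0 : omega * t0 + alpha i = 0) by (unfold t0; field; auto).
  assert (Hacc : vy (a i t0) = 0).
  { rewrite (hyperbolic_accel_y _ _ _ omega (alpha i) Dq Dv (fun _ => eq_refl) t0).
    rewrite Ht0, sinh_0. ring. }
  assert (Hforce : vy (force n m (fun j => mkV3 0 (sinh (omega * t0 + alpha j))
                                                  (cosh (omega * t0 + alpha j))) i) < 0).
  { apply force_y_neg; auto; simpl.
    - rewrite Ht0. apply sinh_0.
    - intros j Hj Hji. rewrite <- sinh_0, <- Ht0. apply sinh_lt.
      assert (alpha j <= alpha i) by auto.
      assert (alpha i <> alpha j) by auto.
      lra. }
  destruct (Heq t0) as [_ [_ [_ Hmotion]]].
  apply (f_equal vy) in Hmotion. simpl in Hmotion.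
  rewrite Hacc, Ht0, sinh_0 in Hmotion.
  lra.
Qed.
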